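(* Let $(X,d)$ be a metric space with a II-modulus of total boundedness $\gamma$, and let $(x_n),(y_n)$ be sequences in $X$. Define recursively $n_0:=0$ and $$n_{k+1}:=\left\lceil \max_{i,j\le k}\{n_k,\ d(x_{n_i},y_{n_j}),\ d(x_{n_i},x_{n_j}),\ d(y_{n_i},y_{n_j})\}+3\right\rceil .$$ Then there exists $N\le n_{\gamma(0)}$ with $d(x_N,y_N)<N$.
   Context: $\mathbb{N}$ includes $0$. A map $\gamma:\mathbb{N}\to\mathbb{N}$ is a II-modulus of total boundedness for $X$ if for every $k\in\mathbb{N}$ and every sequence $(z_n)$ in $X$ there exist $0\le i<j\le\gamma(k)$ with $d(z_i,z_j)\le\frac1{k+1}$. *)

From Stdlib Require Import Reals List.
Import ListNotations.
Open Scope R_scope.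

Definition is_metric {X : Type} (d : X -> X -> R) : Prop :=
  (forall a b, 0 <= d a b) /\
  (forall a b, d a b = 0 <-> a = b) /\
  (forall a b, d a b = d b a) /\
  (forall a b c, d a c <= d a b + d b c).

Definition II_modulus {X : Type} (d : X -> X -> R) (gamma : nat -> nat) : Prop :=
  forall (k : nat) (z : nat -> X),
    exists i j : nat, (i < j)%nat /\ (j <= gamma k)%nat /\
      d (z i) (z j) <= 1 / INR (k + 1).

Definition Rceil (r : R) : Z := (- Int_part (- r))%Z.

Section Seq.
Context {X : Type} (d : X -> X -> R) (x y : nat -> X).

(* max over i,j in l of {last l, d(x_i,y_j), d(x_i,x_j), d(y_i,y_j)} *)
Definition maxval (l : list nat) : R :=
  fold_right (fun a acc =>
    fold_right (fun b acc' =>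
      Rmax acc' (Rmax (d (x a) (y b)) (Rmax (d (x a) (x b)) (d (y a) (y b)))))
      acc l)
    (INR (last l 0%nat)) l.

(* n_{k+1} from the list [n_0; ...; n_k] *)
Definition next_n (l : list nat) : nat := Z.to_nat (Rceil (maxval l + 3)).

Fixpoint nlist (k : nat) : list nat :=
  match k with
  | O => [0%nat]
  | S k' => nlist k' ++ [next_n (nlist k')]
  end.

Definition n_seq (k : nat) : nat := last (nlist k) 0%nat.
End Seq.

(* Suppose d(x_N, y_N) >= N for every N <= n_{gamma(0)}.  Since n_{k+1} exceeds
   every distance among the earlier points x_{n_i}, y_{n_i} by 3, the points
   x_{n_k} and y_{n_k} are more than 2 + (any such distance) apart.  By the
   triangle inequality one of them is at distance > 1 from every point chosen
   before, so greedily choosing x_{n_k} when possible and y_{n_k} otherwise gives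
   gamma(0) + 1 points that are pairwise more than 1 apart, contradicting the
   modulus at k = 0. *)
From Stdlib Require Import Reals.
From Stdlib Require Import ZArith Lra Lia List ClassicalEpsilon Classical.
Open Scope R_scope.

Section SeparatedSelection.
Variables (X : Type) (d : X -> X -> R).
Hypothesis d_sym : forall p q, d p q = d q p.
Hypothesis d_triangle : forall p q r, d p r <= d p q + d q r.
Variables (a b : nat -> X) (K : nat).

Hypothesis pair_gap : forall k i j p q, (k <= K)%nat -> (i < k)%nat -> (j < k)%nat ->
  (p = a i \/ p = b i) -> (q = a j \/ q = b j) -> d p q + 2 < d (a k) (b k).

Definition far_from_earlier (k : nat) : Prop :=
  forall i s, (i < k)%nat -> (s = a i \/ s = b i) -> 1 < d (a k) s.

Definition greedy_pick (k : nat) : X :=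
  if excluded_middle_informative (far_from_earlier k) then a k else b k.

Lemma greedy_pick_in_pair k : greedy_pick k = a k \/ greedy_pick k = b k.
Proof.
  unfold greedy_pick; destruct excluded_middle_informative; auto.
Qed.

Lemma greedy_pick_far i j : (i < j <= K)%nat -> 1 < d (greedy_pick j) (greedy_pick i).
Proof.
  intros [Hij HjK].
  unfold greedy_pick at 1.
  destruct excluded_middle_informative as [Hfar | Hnear].
  - exact (Hfar i _ Hij (greedy_pick_in_pair i)).
  - apply Rnot_le_lt; intro Hb_close.
    apply Hnear; intros i0 s Hi0 Hs.
    apply Rnot_le_lt; intro Ha_close.
    (* a_j -- s -- pick i -- b_j would be a path of length <= 2 + d(s, pick i) *)
    pose proof (pair_gap j i0 i s (greedy_pick i) HjK Hi0 Hij Hs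
                  (greedy_pick_in_pair i)) as Hgap.
    pose proof (d_triangle (a j) s (b j)).
    pose proof (d_triangle s (greedy_pick i) (b j)).
    rewrite d_sym in Hb_close.
    lra.
Qed.

Lemma exists_separated_selection :
  exists w : nat -> X, (forall k, w k = a k \/ w k = b k) /\
    (forall i j, (i < j <= K)%nat -> 1 < d (w i) (w j)).
Proof.
  exists greedy_pick; split.
  - exact greedy_pick_in_pair.
  - intros i j Hij; rewrite d_sym; exact (greedy_pick_far i j Hij).
Qed.

End SeparatedSelection.

Lemma fold_right_inflationary {A : Type} (g : A -> R -> R) acc l :
  (forall c r, r <= g c r) -> acc <= fold_right g acc l.
Proof.
  intros Hg; induction l as [|c l IH]; simpl; [lra |].
  eapply Rle_trans; [exact IH | apply Hg].
Qed.

Lemma fold_right_step_le {A : Type} (g : A -> R -> R) acc l c :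
  (forall c' r, r <= g c' r) -> In c l -> exists r, g c r <= fold_right g acc l.
Proof.
  intros Hg; induction l as [|c0 l IH]; simpl; [tauto |].
  intros [<- | Hc].
  - exists (fold_right g acc l); lra.
  - destruct (IH Hc) as [r Hr].
    exists r; eapply Rle_trans; [exact Hr | apply Hg].
Qed.

Lemma le_INR_to_nat_Rceil r : r <= INR (Z.to_nat (Rceil r)).
Proof.
  unfold Rceil.
  destruct (base_Int_part (- r)) as [Hlow Hup].
  destruct (Z_le_gt_dec 0 (- Int_part (- r))) as [Hnonneg | Hneg].
  - rewrite INR_IZR_INZ, Z2Nat.id, opp_IZR by exact Hnonneg; lra.
  - pose proof (pos_INR (Z.to_nat (- Int_part (- r)))).
    apply Z.gt_lt, IZR_lt in Hneg; rewrite opp_IZR in Hneg; lra.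
Qed.

Section RecursiveIndices.
Variables (X : Type) (d : X -> X -> R) (x y : nat -> X).
Hypothesis d_sym : forall p q, d p q = d q p.

Lemma maxval_ge_last l : INR (last l 0%nat) <= maxval d x y l.
Proof.
  apply fold_right_inflationary; intros c r.
  apply fold_right_inflationary; intros; apply Rmax_l.
Qed.

Lemma maxval_ge_pair l i j :
  In i l -> In j l ->
  Rmax (d (x i) (y j)) (Rmax (d (x i) (x j)) (d (y i) (y j))) <= maxval d x y l.
Proof.
  intros Hi Hj; unfold maxval.
  match goal with |- _ <= fold_right ?g ?acc _ =>
    destruct (fold_right_step_le g acc l i) as [r Hr]; [| exact Hi |] end.
  { intros c r; apply fold_right_inflationary; intros; apply Rmax_l. }
  eapply Rle_trans; [| exact Hr].
  match goal with |- _ <= fold_right ?g ?acc _ =>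
    destruct (fold_right_step_le g acc l j) as [r' Hr']; [intros; apply Rmax_l | exact Hj |] end.
  eapply Rle_trans; [apply Rmax_r | exact Hr'].
Qed.

Lemma maxval_ge_dist l i j p q :
  In i l -> In j l -> (p = x i \/ p = y i) -> (q = x j \/ q = y j) ->
  d p q <= maxval d x y l.
Proof.
  intros Hi Hj Hp Hq.
  pose proof (maxval_ge_pair l i j Hi Hj) as Hij.
  pose proof (maxval_ge_pair l j i Hj Hi) as Hji.
  pose proof (Rmax_l (d (x i) (y j)) (Rmax (d (x i) (x j)) (d (y i) (y j)))).
  pose proof (Rmax_r (d (x i) (y j)) (Rmax (d (x i) (x j)) (d (y i) (y j)))).
  pose proof (Rmax_l (d (x i) (x j)) (d (y i) (y j))).
  pose proof (Rmax_r (d (x i) (x j)) (d (y i) (y j))).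
  pose proof (Rmax_l (d (x j) (y i)) (Rmax (d (x j) (x i)) (d (y j) (y i)))).
  destruct Hp as [-> | ->], Hq as [-> | ->]; try lra.
  rewrite d_sym; lra.
Qed.

Lemma n_seq_S k : n_seq d x y (S k) = next_n d x y (nlist d x y k).
Proof. unfold n_seq; simpl; apply last_last. Qed.

Lemma n_seq_in_nlist i k : (i <= k)%nat -> In (n_seq d x y i) (nlist d x y k).
Proof.
  induction k as [|k IH]; intros Hik.
  - replace i with 0%nat by lia; simpl; auto.
  - simpl; apply in_or_app.
    destruct (Nat.eq_dec i (S k)) as [-> | Hne].
    + right; left; symmetry; apply n_seq_S.
    + left; apply IH; lia.
Qed.

Lemma maxval_add3_le_n_seq_S k : maxval d x y (nlist d x y k) + 3 <= INR (n_seq d x y (S k)).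
Proof. rewrite n_seq_S; apply le_INR_to_nat_Rceil. Qed.

Lemma n_seq_le_S k : (n_seq d x y k <= n_seq d x y (S k))%nat.
Proof.
  apply INR_le.
  pose proof (maxval_ge_last (nlist d x y k)).
  pose proof (maxval_add3_le_n_seq_S k).
  unfold n_seq at 1; lra.
Qed.

Lemma n_seq_monotone i k : (i <= k)%nat -> (n_seq d x y i <= n_seq d x y k)%nat.
Proof.
  induction 1 as [|k _ IH]; [lia |].
  pose proof (n_seq_le_S k); lia.
Qed.

Lemma dist_add3_le_n_seq_S k i j p q :
  (i <= k)%nat -> (j <= k)%nat ->
  (p = x (n_seq d x y i) \/ p = y (n_seq d x y i)) ->
  (q = x (n_seq d x y j) \/ q = y (n_seq d x y j)) ->
  d p q + 3 <= INR (n_seq d x y (S k)).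
Proof.
  intros Hi Hj Hp Hq.
  pose proof (maxval_ge_dist _ _ _ p q (n_seq_in_nlist i k Hi) (n_seq_in_nlist j k Hj) Hp Hq).
  pose proof (maxval_add3_le_n_seq_S k); lra.
Qed.

End RecursiveIndices.

Theorem proposition2p5 (X : Type) (d : X -> X -> R) (gamma : nat -> nat)
  (x y : nat -> X) :
  is_metric d -> II_modulus d gamma ->
  exists N : nat, (N <= n_seq d x y (gamma 0%nat))%nat /\ d (x N) (y N) < INR N.
Proof.
  intros [_ [_ [d_sym d_triangle]]] Hmodulus.
  apply NNPP; intro Hnone.
  assert (Hfar : forall N, (N <= n_seq d x y (gamma 0%nat))%nat -> INR N <= d (x N) (y N)).
  { intros N HN; apply Rnot_lt_le; intro Hlt; apply Hnone; eauto. }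
  destruct (exists_separated_selection X d d_sym d_triangle
              (fun k => x (n_seq d x y k)) (fun k => y (n_seq d x y k)) (gamma 0%nat))
    as [w [_ Hsep]].
  - intros k i j p q HkK Hik Hjk Hp Hq.
    destruct k as [|k]; [lia |].
    pose proof (dist_add3_le_n_seq_S X d x y d_sym k i j p q ltac:(lia) ltac:(lia) Hp Hq).
    pose proof (Hfar _ (n_seq_monotone X d x y _ _ HkK)); lra.
  - destruct (Hmodulus 0%nat w) as [i [j [Hij [Hj Hclose]]]].
    replace (1 / INR (0 + 1)) with 1 in Hclose by (simpl; field).
    pose proof (Hsep i j ltac:(lia)); lra.
Qed.
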